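(* For all integers $n\ge2$ and $d$, the $(n-1)\times(n-1)$ matrix $P(n,d)=\bigl(p_{n,d}(i,j)\bigr)_{i,j=1}^{n-1}$ is symmetric and Toeplitz, i.e. $p_{n,d}(i,j)=p_{n,d}(j,i)$ for all $i,j\in[n-1]$ and $p_{n,d}(i+1,j+1)=p_{n,d}(i,j)$ for all $i,j\in[n-2]$.
   Context: A cycle $(c_1c_2\cdots c_k)$ of a permutation means $c_1\mapsto c_2\mapsto\cdots\mapsto c_k\mapsto c_1$. Its cyclic descent number is $\operatorname{cdes}(c)=\lvert\{t\in[k]: c_t>c_{t+1}\}\rvert$ and its cyclic ascent number $\operatorname{casc}(c)=\lvert\{t\in[k]: c_t<c_{t+1}\}\rvert$, where $c_{k+1}=c_1$; its cyclic weight is $w(c)=\min(\operatorname{cdes}(c),\operatorname{casc}(c))$, and the cyclic weight $w(\pi)$ of a permutation $\pi$ is the sum of the cyclic weights of all its cycles. An odd order permutation is one all of whose cycles have odd length. $\mathscr{P}_{n,d}$ is the set of odd order permutations of $[n]$ with cyclic weight $d$, and $p_{n,d}(i,j)$ is the number of $\pi\in\mathscr{P}_{n,d}$ containing $i\,n\,j$ as a cyclic factor, i.e. some cycle of $\pi$, written starting at a suitable element, contains $i,n,j$ consecutively (equivalently $\pi(i)=n$ and $\pi(n)=j$). *)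

From mathcomp Require Import all_boot all_order all_fingroup all_algebra.
Set Implicit Arguments. Unset Strict Implicit. Unset Printing Implicit Defensive.

(* Permutations of [n] = {1,..,n} are modelled as {perm 'I_n}; the ordinal
   with value k represents the element k+1 of [n].  The order on 'I_n is the
   order on labels. *)

Definition cdes n (s : {perm 'I_n}) (C : {set 'I_n}) : nat :=
  #|[set x in C | s x < x]|.
Definition casc n (s : {perm 'I_n}) (C : {set 'I_n}) : nat :=
  #|[set x in C | x < s x]|.

Definition cyc_weight n (s : {perm 'I_n}) (C : {set 'I_n}) : nat :=
  minn (cdes s C) (casc s C).

Definition perm_cweight n (s : {perm 'I_n}) : nat :=
  \sum_(C in porbits s) cyc_weight s C.

Definition odd_order n (s : {perm 'I_n}) : bool :=
  [forall C in porbits s, odd #|C|].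

Definition p_nd (n : nat) (d : int) (i j : nat) : nat :=
  #|[set s : {perm 'I_n} |
      [&& odd_order s, Posz (perm_cweight s) == d,
          [forall x, (val x == i.-1) ==> (val (s x) == n.-1)]
        & [forall x, (val x == n.-1) ==> (val (s x) == j.-1)]]]|.

From mathcomp Require Import all_boot all_order all_fingroup all_algebra.
From mathcomp Require Import zify.

(* Symmetry: inversion maps the permutations with cyclic factor [i n j] onto
   those with cyclic factor [j n i] and exchanges the cyclic descents and
   ascents of each cycle, so it preserves the cyclic weight.
   Toeplitz: conjugation by the relabelling [1 -> 2 -> ... -> n-1 -> 1]
   (fixing [n]) turns the factor [i n j] into [(i+1) n (j+1)].  As [n] is not
   a neighbour of [n-1] in its cycle, [n-1] is a cyclic peak; becoming the
   smallest label makes it a cyclic valley, so its outgoing descent turns into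
   an ascent and its incoming ascent into a descent, while all other
   comparisons are unchanged: descent and ascent counts of each cycle, hence
   the cyclic weight, are preserved. *)

Set Implicit Arguments.
Unset Strict Implicit.
Unset Printing Implicit Defensive.

Section PorbitsConj.

Variable T : finType.
Local Open Scope group_scope.

Lemma porbit_conj (s f : {perm T}) x :
  porbit (s ^ f) (f x) = f @: porbit s x.
Proof.
apply/setP => y; apply/porbitP/imsetP => [[i ->] | [z /porbitP[i ->] ->]].
- by exists ((s ^+ i) x); rewrite ?mem_porbit // -conjXg permJ.
- by exists i; rewrite -conjXg permJ.
Qed.

Lemma porbits_conj (s f : {perm T}) :
  porbits (s ^ f) = (fun C : {set T} => f @: C) @: porbits s.
Proof.
apply/setP => C; apply/imsetP/imsetP => [[y _ ->] | [_ /imsetP[x _ ->] ->]].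
- by exists (porbit s (f^-1 y)); rewrite ?imset_f // -porbit_conj permKV.
- by exists (f x); rewrite ?porbit_conj.
Qed.

End PorbitsConj.

Section CycleStatistics.

Variable n : nat.
Local Open Scope group_scope.
Implicit Types (s f : {perm 'I_n}) (C : {set 'I_n}).

Lemma odd_order_cweight_transfer s s' (F : {set 'I_n} -> {set 'I_n}) :
  injective F -> porbits s' = F @: porbits s ->
  {in porbits s, forall C,
     #|F C| = #|C| /\ cyc_weight s' (F C) = cyc_weight s C} ->
  odd_order s' = odd_order s /\ perm_cweight s' = perm_cweight s.
Proof.
move=> F_inj Es' FC; split.
- rewrite /odd_order Es'.
  apply/forall_inP/forall_inP => [oddF C Cs | odds _ /imsetP[C Cs ->]].
  + by rewrite -(FC C Cs).1 oddF ?imset_f.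
  + by rewrite (FC C Cs).1 odds.
- rewrite /perm_cweight Es' big_imset /=; last by move=> C D _ _ /F_inj.
  by apply: eq_bigr => C Cs; rewrite (FC C Cs).2.
Qed.

Lemma perm_in_porbits s C x : C \in porbits s -> (s x \in C) = (x \in C).
Proof.
by case/imsetP=> y _ ->; rewrite -!eq_porbit_mem -[in LHS](expg1 s) porbit_perm.
Qed.

Lemma card_porbits_shift s C (P : rel 'I_n) : C \in porbits s ->
  #|[set x in C | P x (s x)]| = #|[set x in C | P (s^-1 x) x]|.
Proof.
move=> Cs; rewrite -[RHS](card_preimset _ (@perm_inj _ s)).
by apply: eq_card => x; rewrite !inE permK perm_in_porbits.
Qed.

Lemma cdesV s C : C \in porbits s -> cdes s^-1 C = casc s C.
Proof.
by move=> Cs; rewrite /casc (card_porbits_shift (fun x y => x < y) Cs).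
Qed.

Lemma cascV s C : C \in porbits s -> casc s^-1 C = cdes s C.
Proof.
by move=> Cs; rewrite /cdes (card_porbits_shift (fun x y => y < x) Cs).
Qed.

Lemma odd_order_cweightV s :
  odd_order s^-1 = odd_order s /\ perm_cweight s^-1 = perm_cweight s.
Proof.
apply: (@odd_order_cweight_transfer _ _ id) => //.
  by rewrite porbitsV imset_id.
by move=> C Cs; rewrite /cyc_weight cdesV // cascV // minnC.
Qed.

Lemma card_porbits_conj (P : rel 'I_n) s f C :
  #|[set y in f @: C | P y ((s ^ f) y)]| = #|[set x in C | P (f x) (f (s x))]|.
Proof.
rewrite -(card_preimset _ (@perm_inj _ f)).
by apply: eq_card => x; rewrite !inE mem_imset ?permJ //; apply: perm_inj.
Qed.

Section PeakToValley.

Variables (f : {perm 'I_n}) (m : 'I_n).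
Hypothesis f_mono : {in predC1 m &, {mono f : x y / x < y}}.
Hypothesis f_min : forall y, f m <= f y.

(* [tperm m (s^-1 m)] trades the descent at [m] lost by relabelling for the
   descent at [s^-1 m] gained by it. *)
Lemma relabel_descent s x : s m <= m -> s^-1 m <= m ->
  (f (s x) < f x) = (s (tperm m (s^-1 m) x) < tperm m (s^-1 m) x).
Proof.
move=> s_peak sV_peak; case: tpermP => [->|->|xm xsVm].
- by rewrite permKV ltnNge f_min ltnNge sV_peak.
- rewrite permKV ltn_neqAle f_min ltn_neqAle s_peak !andbT.
  by rewrite !(inj_eq val_inj) (inj_eq perm_inj) (can2_eq (permK s) (permKV s)).
- have sxm : s x \in predC1 m.
    by rewrite inE; apply/eqP => sxm; apply: xsVm; rewrite -sxm permK.
  by rewrite f_mono // inE; apply/eqP.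
Qed.

Lemma card_relabel_descents s C : s m <= m -> s^-1 m <= m -> C \in porbits s ->
  #|[set x in C | f (s x) < f x]| = cdes s C.
Proof.
move=> s_peak sV_peak Cs; rewrite /cdes.
rewrite -[RHS](card_preimset _ (@perm_inj _ (tperm m (s^-1 m)))).
apply: eq_card => x; rewrite !inE relabel_descent //; congr (_ && _).
have sVmC : (s^-1 m \in C) = (m \in C).
  by rewrite -(perm_in_porbits _ Cs) permKV.
by case: tpermP => [->|->|//]; rewrite sVmC.
Qed.

Lemma card_relabel_ascents s C : s m <= m -> s^-1 m <= m -> C \in porbits s ->
  #|[set x in C | f x < f (s x)]| = casc s C.
Proof.
move=> s_peak sV_peak Cs.
rewrite (card_porbits_shift (fun x y => f x < f y) Cs).
by rewrite -cdesV // card_relabel_descents ?invgK ?porbitsV.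
Qed.

Lemma odd_order_cweight_conj_peak s : s m <= m -> s^-1 m <= m ->
  odd_order (s ^ f) = odd_order s /\ perm_cweight (s ^ f) = perm_cweight s.
Proof.
move=> s_peak sV_peak.
apply: (odd_order_cweight_transfer (F := fun C : {set _} => f @: C)).
- exact/imset_inj/perm_inj.
- exact: porbits_conj.
move=> C Cs; rewrite card_imset; last exact: perm_inj.
rewrite /cyc_weight /cdes /casc (card_porbits_conj (fun x y => y < x)).
rewrite (card_porbits_conj (fun x y => x < y)).
by rewrite card_relabel_descents ?card_relabel_ascents.
Qed.

End PeakToValley.

End CycleStatistics.

Section ShiftRelabelling.

Variable k : nat.

Definition shift_label (x : nat) : nat :=
  if x < k then x.+1 else if x == k then 0 else x.

Lemma shift_label_inj : injective shift_label.
Proof.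
move=> x y; rewrite /shift_label.
by case: (ltngtP x k); case: (ltngtP y k); lia.
Qed.

Lemma shift_label_mono : {in predC1 k &, {mono shift_label : x y / x < y}}.
Proof.
move=> x y; rewrite !inE /shift_label.
by case: (ltngtP x k); case: (ltngtP y k); lia.
Qed.

Lemma shift_label_ord (x : 'I_k.+2) : shift_label x < k.+2.
Proof. by rewrite /shift_label; case: (ltngtP x k); have := ltn_ord x; lia. Qed.

Definition shift_ord (x : 'I_k.+2) : 'I_k.+2 := Ordinal (shift_label_ord x).

Lemma shift_ord_inj : injective shift_ord.
Proof. by move=> x y /(congr1 val)/shift_label_inj/val_inj. Qed.

Definition shift_perm : {perm 'I_k.+2} := perm shift_ord_inj.

Lemma shift_permE x : shift_perm x = shift_label x :> nat.
Proof. by rewrite permE. Qed.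

Lemma inord_k : (inord k : 'I_k.+2) = k :> nat.
Proof. exact: inordK. Qed.

Lemma shift_perm_mono :
  {in predC1 (inord k) &, {mono shift_perm : x y / x < y}}.
Proof.
move=> x y; rewrite !inE -!val_eqE /= inord_k => xk yk.
by rewrite !shift_permE shift_label_mono.
Qed.

Lemma shift_perm_min y : shift_perm (inord k) <= shift_perm y.
Proof. by rewrite shift_permE inord_k /shift_label ltnn eqxx. Qed.

Lemma shift_perm_max : shift_perm ord_max = ord_max.
Proof.
apply: val_inj; rewrite /= shift_permE /shift_label /ord_max /=.
by case: (ltngtP k.+1 k); lia.
Qed.

Lemma shift_perm_inord x : x < k -> shift_perm (inord x) = inord x.+1.
Proof.
move=> xk; have [x_ord xS_ord] : x < k.+2 /\ x.+1 < k.+2 by lia.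
by apply: val_inj => /=; rewrite shift_permE !inordK // /shift_label xk.
Qed.

End ShiftRelabelling.

Definition cfactor_perms n (d : int) (a b : 'I_n.+1) : {set {perm 'I_n.+1}} :=
  [set s | [&& odd_order s, Posz (perm_cweight s) == d,
              s a == ord_max & s ord_max == b]].

Lemma maps_toE n (s : {perm 'I_n.+1}) a b : a < n.+1 -> b < n.+1 ->
  [forall x, (val x == a) ==> (val (s x) == b)] = (s (inord a) == inord b).
Proof.
move=> a_ord b_ord; apply/forall_inP/eqP => [sab | sab x /eqP xa].
  by apply: val_inj; rewrite /= inordK //; apply/eqP/sab; rewrite /= inordK.
have -> : x = inord a by rewrite -xa inord_val.
by rewrite sab /= inordK.
Qed.

Lemma p_ndE n d i j : i <= n.+1 -> j <= n.+1 ->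
  p_nd n.+1 d i j = #|cfactor_perms d (inord i.-1 : 'I_n.+1) (inord j.-1)|.
Proof.
move=> i_le j_le; apply: eq_card => s.
rewrite !inE !maps_toE ?(inord_val ord_max) //; lia.
Qed.

Lemma card_cfactor_permsC n d (a b : 'I_n.+1) :
  #|cfactor_perms d a b| = #|cfactor_perms d b a|.
Proof.
rewrite -[RHS](card_preimset _ (@invg_inj _)).
apply: eq_card => s; rewrite !inE.
have [-> ->] := odd_order_cweightV s; rewrite !(canF_eq (permKV s)).
by rewrite (andbC (b == _)) (eq_sym ord_max) (eq_sym b).
Qed.

Lemma card_cfactor_perms_shift k d (a b : 'I_k.+2) : a < k -> b < k ->
  #|cfactor_perms d (shift_perm k a) (shift_perm k b)| = #|cfactor_perms d a b|.
Proof.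
move=> ak bk; rewrite -[LHS](card_preimset _ (@conjg_inj _ (shift_perm k))).
apply: eq_card => s; rewrite !inE -shift_perm_max !permJ !(inj_eq perm_inj).
rewrite shift_perm_max.
have [sa|] := eqVneq (s a) ord_max; last by rewrite /= !andbF.
have [sb|] := eqVneq (s ord_max) b; last by rewrite /= !andbF.
pose m : 'I_k.+2 := inord k; have m_k : m = k :> nat := inord_k k.
have below_max (x : 'I_k.+2) : x != ord_max -> x <= m.
  by rewrite m_k -val_eqE /ord_max /= => /eqP; have := ltn_ord x; lia.
have s_peak : s m <= m.
  apply: below_max; rewrite -sa (inj_eq perm_inj).
  by apply: contraTneq ak => <-; rewrite m_k ltnn.
have sV_peak : (s^-1)%g m <= m.
  apply: below_max; rewrite (canF_eq (permKV s)) sb.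
  by apply: contraTneq bk => <-; rewrite m_k ltnn.
by case: (odd_order_cweight_conj_peak (@shift_perm_mono k) (@shift_perm_min k)
  s_peak sV_peak) => -> ->.
Qed.

Theorem theorem3p2 (n : nat) (d : int) : 2 <= n ->
  (forall i j : nat, 1 <= i <= n.-1 -> 1 <= j <= n.-1 ->
     p_nd n d i j = p_nd n d j i) /\
  (forall i j : nat, 1 <= i <= n - 2 -> 1 <= j <= n - 2 ->
     p_nd n d i.+1 j.+1 = p_nd n d i j).
Proof.
case: n => [|[|k]] // _; split=> [i j hi hj | [|i] [|j] // hi hj].
- by rewrite !p_ndE; [apply: card_cfactor_permsC | lia..].
- rewrite !p_ndE /= -?shift_perm_inord; [|lia..].
  by rewrite card_cfactor_perms_shift ?inordK //; lia.
Qed.
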